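(* Let $T\ge 3$ be an integer, let $M>1$, $\alpha\in(0,1)$ and $g(\alpha)\in(0,1)$, and set $g(0)=1$, $g(1)=0$. Let $x_1,\dots,x_T\in\{0,1\}$ (request arrivals) and let $c_1,\dots,c_T$ be real numbers with $0<c_{\min}\le c_t\le c_{\max}$ (rent costs). For a hosting sequence $r=(r_1,\dots,r_T)\in\{0,\alpha,1\}^T$ define its total cost $$C(r)=\sum_{t=1}^{T}\bigl(c_t r_t+g(r_t)x_t\bigr)+\sum_{t=1}^{T-1}M\,(r_{t+1}-r_t)^+ .$$ Let $r^*=(r^*_1,\dots,r^*_T)$ be an optimal offline hosting sequence, i.e. a minimizer of $C$ over all sequences in $\{0,\alpha,1\}^T$ (with the same prescribed initial value $r_1$ as the competing sequences). Let $(a,b)\in\{(0,\alpha),(0,1),(\alpha,1-\alpha)\}$ and let $2\le n\le m\le T-1$. If $r^*_{n-1}=a$, $r^*_t=a+b$ for all $n\le t\le m$, and $r^*_{m+1}=a$, then $$\bigl(g(a)-g(a+b)\bigr)\sum_{l=n}^{m}x_l\;\ge\; bM+b\sum_{l=n}^{m}c_l .$$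
   Context: This is the offline version of a partial service hosting problem at an edge server: in each time-slot $t$ a fraction $r_t\in\{0,\alpha,1\}$ of a service is hosted at the edge; hosting incurs rent $c_t r_t$, each request arriving in slot $t$ costs $g(r_t)$ to serve (the part not served at the edge), and increasing the hosted fraction from $r_t$ to $r_{t+1}$ incurs a fetch cost $M(r_{t+1}-r_t)^+$ (decreasing it is free). The offline optimal policy knows all $x_t$ and $c_t$ in advance and minimizes the total cost $C(r)$. *)

From mathcomp Require Import all_boot all_order all_algebra.
Set Implicit Arguments. Unset Strict Implicit. Unset Printing Implicit Defensive.
Import Order.TTheory GRing.Theory Num.Theory.
Local Open Scope ring_scope.

Definition host_level (R : realFieldType) (al v : R) : Prop :=
  v = 0 \/ v = al \/ v = 1.

Definition admissible (R : realFieldType) (T : nat) (al : R) (r : nat -> R) : Prop :=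
  forall t, (1 <= t <= T)%N -> host_level al (r t).

Definition cost (R : realFieldType) (T : nat) (c x : nat -> R) (g : R -> R) (M : R)
    (r : nat -> R) : R :=
  \sum_(1 <= t < T.+1) (c t * r t + g (r t) * x t)
  + \sum_(1 <= t < T) M * Num.max (r t.+1 - r t) 0.

Definition offline_opt (R : realFieldType) (T : nat) (al : R) (c x : nat -> R)
    (g : R -> R) (M : R) (rs : nat -> R) : Prop :=
  admissible T al rs /\
  forall r, admissible T al r -> r 1%N = rs 1%N -> cost T c x g M rs <= cost T c x g M r.

From mathcomp Require Import all_boot all_order all_algebra.
From mathcomp Require Import ring lra zify.
Set Implicit Arguments. Unset Strict Implicit. Unset Printing Implicit Defensive.
Import Order.TTheory GRing.Theory Num.Theory.
Local Open Scope ring_scope.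

(* Lower the hosted fraction from [a + b] to [a] on the whole block [n, m].
   This saves the rent [b c_l] in every slot of the block and the fetch cost
   [b M] paid when entering it, costs nothing when leaving the block (moving
   down is free), and makes each request of the block cost [g a] instead of
   [g (a + b)]. Optimality of [r*] says the change does not pay off, which is
   exactly the inequality. *)

Lemma sumrB_nat_eq_out (V : zmodType) (f h : nat -> V) (lo i j hi : nat) :
  (lo <= i <= j)%N -> (j <= hi)%N ->
  (forall t, (t < i)%N || (j <= t)%N -> f t = h t) ->
  \sum_(lo <= t < hi) f t - \sum_(lo <= t < hi) h t
  = \sum_(i <= t < j) (f t - h t).
Proof.
move=> /andP[lo_i i_j] j_hi fh_out.
have diff0 t : (t < i)%N || (j <= t)%N -> f t - h t = 0.
  by move=> /fh_out ->; rewrite subrr.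
rewrite -sumrB (@big_cat_nat _ _ _ i) ?(leq_trans i_j) //= (@big_cat_nat _ _ _ j i) //=.
rewrite big_nat_cond big1 ?add0r; last first.
  by move=> t /andP[/andP[_ t_i] _]; rewrite diff0 // t_i.
rewrite [\sum_(j <= t < hi) _]big_nat_cond [\sum_(j <= t < hi | _) _]big1 ?addr0 //.
by move=> t /andP[/andP[j_t _] _]; rewrite diff0 // j_t orbT.
Qed.

Definition lower_block (R : Type) (r : nat -> R) (a : R) (n m : nat) (t : nat) : R :=
  if (n <= t <= m)%N then a else r t.

Lemma admissible_lower_block (R : realFieldType) (T : nat) (al : R) (r : nat -> R)
    (a : R) (n m : nat) :
  admissible T al r -> host_level al a -> admissible T al (lower_block r a n m).
Proof. by move=> adm ha t Tt; rewrite /lower_block; case: ifP => // _; apply: adm. Qed.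

Lemma lower_block_in (R : Type) (r : nat -> R) (a : R) (n m t : nat) :
  (n <= t <= m)%N -> lower_block r a n m t = a.
Proof. by rewrite /lower_block => ->. Qed.

Lemma lower_block_out (R : Type) (r : nat -> R) (a : R) (n m t : nat) :
  (t < n)%N || (m < t)%N -> lower_block r a n m t = r t.
Proof. by move=> out; rewrite /lower_block ifF //; apply/negbTE; lia. Qed.

Section LowerBlockCost.

Variables (R : realFieldType) (T : nat) (c x : nat -> R) (g : R -> R) (M : R).
Variables (rs : nat -> R) (a b : R) (n m : nat).

Let r' := lower_block rs a n m.

Lemma service_cost_lower_block :
  (0 < n)%N -> (n <= m)%N -> (m <= T)%N ->
  (forall t, (n <= t <= m)%N -> rs t = a + b) ->
  \sum_(1 <= t < T.+1) (c t * rs t + g (rs t) * x t)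
  - \sum_(1 <= t < T.+1) (c t * r' t + g (r' t) * x t)
  = b * \sum_(n <= t < m.+1) c t - (g a - g (a + b)) * \sum_(n <= t < m.+1) x t.
Proof.
move=> n_gt0 n_le_m m_le_T rs_block.
rewrite /r' (@sumrB_nat_eq_out _ _ _ 1 n m.+1); first last.
- by move=> t out; rewrite lower_block_out //; lia.
- lia.
- apply/andP; split; lia.
rewrite !mulr_sumr -sumrB; apply: eq_big_nat => t block.
by rewrite lower_block_in ?rs_block //; ring.
Qed.

Lemma lower_block_frame t :
  rs n.-1 = a -> rs m.+1 = a -> (n.-1 <= t <= m.+1)%N -> r' t = a.
Proof.
rewrite /r' => rs_before rs_after frame.
have [block | out] := boolP (n <= t <= m)%N; first exact: lower_block_in.
rewrite lower_block_out; last lia.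
by have [-> | ->] : t = n.-1 \/ t = m.+1 by lia.
Qed.

Lemma fetch_cost_lower_block :
  0 <= b -> (2 <= n)%N -> (n <= m)%N -> (m < T)%N ->
  rs n.-1 = a -> rs m.+1 = a -> (forall t, (n <= t <= m)%N -> rs t = a + b) ->
  \sum_(1 <= t < T) M * Num.max (rs t.+1 - rs t) 0
  - \sum_(1 <= t < T) M * Num.max (r' t.+1 - r' t) 0 = b * M.
Proof.
move=> b_ge0 n_ge2 n_le_m m_lt_T rs_before rs_after rs_block.
have max00 : Num.max (0 : R) 0 = 0 by apply/max_idPl.
have r'_flat t : (n.-1 <= t <= m)%N -> r' t.+1 - r' t = 0.
  by move=> frame; rewrite !lower_block_frame ?subrr //; lia.
have rs_no_rise t : (n <= t <= m)%N -> Num.max (rs t.+1 - rs t) 0 = 0.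
  move=> block; apply/max_idPr; rewrite (rs_block t block).
  have [t_lt_m | ->] : (t < m)%N \/ t = m by lia.
    by rewrite rs_block ?subrr //; lia.
  by rewrite rs_after opprD addrA subrr add0r oppr_le0.
rewrite (@sumrB_nat_eq_out _ _ _ 1 n.-1 m.+1); first last.
- by move=> t out; rewrite /r' !lower_block_out //; lia.
- lia.
- apply/andP; split; lia.
rewrite big_ltn; last lia.
rewrite r'_flat ?max00 ?mulr0 ?subr0; last lia.
rewrite prednK; last lia.
rewrite big_nat_cond big1 ?addr0; last first.
  move=> t /andP[block _]; rewrite r'_flat ?rs_no_rise ?max00 ?subrr //; lia.
rewrite rs_block ?rs_before; last lia.
by rewrite addrC addKr (max_idPl b_ge0) mulrC.
Qed.

Lemma cost_lower_block :
  0 <= b -> (2 <= n)%N -> (n <= m)%N -> (m < T)%N ->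
  rs n.-1 = a -> rs m.+1 = a -> (forall t, (n <= t <= m)%N -> rs t = a + b) ->
  cost T c x g M rs - cost T c x g M r'
  = b * M + b * \sum_(n <= t < m.+1) c t
    - (g a - g (a + b)) * \sum_(n <= t < m.+1) x t.
Proof.
move=> b_ge0 n_ge2 n_le_m m_lt_T rs_before rs_after rs_block.
rewrite /cost opprD addrACA service_cost_lower_block ?fetch_cost_lower_block //; try lia.
by rewrite addrC addrA.
Qed.

End LowerBlockCost.

Theorem mainTheorem1 (R : realFieldType) (T : nat) (M al cmin cmax : R)
    (g : R -> R) (x c rs : nat -> R) (a b : R) (n m : nat) :
  (3 <= T)%N -> 1 < M -> 0 < al < 1 -> 0 < g al < 1 -> g 0 = 1 -> g 1 = 0 ->
  (forall t, (1 <= t <= T)%N -> x t = 0 \/ x t = 1) ->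
  0 < cmin -> (forall t, (1 <= t <= T)%N -> cmin <= c t <= cmax) ->
  offline_opt T al c x g M rs ->
  ((a, b) = (0, al) \/ (a, b) = (0, 1) \/ (a, b) = (al, 1 - al)) ->
  (2 <= n)%N -> (n <= m)%N -> (m <= T - 1)%N ->
  rs n.-1 = a -> (forall t, (n <= t <= m)%N -> rs t = a + b) -> rs m.+1 = a ->
  b * M + b * \sum_(n <= l < m.+1) c l <= (g a - g (a + b)) * \sum_(n <= l < m.+1) x l.
Proof.
move=> _ _ /andP[al_gt0 al_lt1] _ _ _ _ _ _ [adm opt] hab n_ge2 n_le_m m_le_T1
  rs_before rs_block rs_after.
have [a_level b_ge0] : host_level al a /\ 0 <= b.
  by case: hab => [[-> ->]|[[-> ->]|[-> ->]]]; split; rewrite /host_level; lra.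
have m_lt_T : (m < T)%N by lia.
have same_start : lower_block rs a n m 1 = rs 1 by rewrite lower_block_out //; lia.
have := opt _ (admissible_lower_block n m adm a_level) same_start.
by rewrite -subr_le0 (cost_lower_block _ _ _ _ b_ge0) // subr_le0.
Qed.
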